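(* Let $r\le s$, $M$ the space of complex $r\times s$ matrices, and $\lambda,\lambda'$ pre-partitions of length at most $r$ with associated orbits $O_\lambda,O_{\lambda'}\subset M_\infty$. If $O_{\lambda'}$ is contained in the Zariski closure of $O_\lambda$, then $\lambda\lhd\lambda'$, i.e. $\lambda_i+\dots+\lambda_r\le\lambda'_i+\dots+\lambda'_r$ for all $i$.
   Context: The $\mathbb{C}$-points of the arc space $M_\infty$ are $r\times s$ matrices over $\mathbb{C}[[t]]$, acted on by $G_\infty$, $G=GL_r\times GL_s$, via $(g,h)\cdot A=gAh^{-1}$. A pre-partition of length at most $r$ is $\lambda_1\ge\dots\ge\lambda_r\ge0$ in $\mathbb N\cup\{\infty\}$ (with $\infty>n$, $\infty+n=\infty$). $\delta_\lambda$ is the $r\times s$ matrix with first $s-r$ columns zero and last $r$ columns $\mathrm{diag}(t^{\lambda_1},\dots,t^{\lambda_r})$ ($t^\infty=0$), and $O_\lambda=G_\infty\cdot\delta_\lambda$. *)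

(* The field of complex numbers is modelled as  R[i]  =
   complex R  for an arbitrary  R : realType  (a complete archimedean
   ordered field, i.e. a model of the real numbers). *)
From HB Require Import structures.
From mathcomp Require Import all_boot all_order all_algebra.
From mathcomp Require Import complex.
From mathcomp Require Import reals.
Set Implicit Arguments. Unset Strict Implicit. Unset Printing Implicit Defensive.
Import Order.TTheory GRing.Theory Num.Theory.
Local Open Scope ring_scope.

Inductive enat := Fin of nat | Inf.

Definition eadd (a b : enat) : enat :=
  match a, b with Fin m, Fin n => Fin (m + n) | _, _ => Inf end.

Definition ele (a b : enat) : bool :=
  match a, b with
  | _, Inf => true
  | Inf, Fin _ => false
  | Fin m, Fin n => (m <= n)%N
  end.

(* pre-partition of length at most r : lambda_1 >= ... >= lambda_r >= 0,
   indexed here by 'I_r (index i : 'I_r stands for lambda_{i+1}). *)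
Definition prepartition (r : nat) (lam : 'I_r -> enat) : Prop :=
  forall i j : 'I_r, (i <= j)%N -> ele (lam j) (lam i).

Definition tailsum (r : nat) (lam : 'I_r -> enat) (i : 'I_r) : enat :=
  \big[eadd/Fin 0]_(j < r | (i <= j)%N) lam j.

Definition ledom (r : nat) (lam lam' : 'I_r -> enat) : Prop :=
  forall i : 'I_r, ele (tailsum lam i) (tailsum lam' i).

Definition pser (K : Type) := nat -> K.

Definition pmul (K : comNzRingType) (f g : pser K) : pser K :=
  fun n => \sum_(k < n.+1) f k * g (n - k)%N.

(* t^a, with t^∞ = 0 *)
Definition tpow (K : comNzRingType) (a : enat) : pser K :=
  fun k => match a with Fin n => if k == n then 1 else 0 | Inf => 0 end.

(* an m x n matrix over K[[t]] (a K-point of the arc space of m x n matrices) *)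
Definition arcmx (K : Type) (m n : nat) := 'I_m -> 'I_n -> pser K.

Definition amul (K : comNzRingType) (m n p : nat)
  (A : arcmx K m n) (B : arcmx K n p) : arcmx K m p :=
  fun i j k => \sum_(l < n) pmul (A i l) (B l j) k.

Definition aone (K : comNzRingType) (n : nat) : arcmx K n n :=
  fun i j k => if (i == j) && (k == 0%N) then 1 else 0.

Definition aeq (K : Type) (m n : nat) (A B : arcmx K m n) : Prop :=
  forall i j k, A i j k = B i j k.

Definition is_inverse (K : comNzRingType) (n : nat) (g ginv : arcmx K n n) : Prop :=
  aeq (amul g ginv) (@aone K n) /\ aeq (amul ginv g) (@aone K n).

(* delta_lambda : first s - r columns zero, last r columns diag(t^lambda_i) *)
Definition delta_lam (K : comNzRingType) (r s : nat) (lam : 'I_r -> enat) : arcmx K r s :=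
  fun i j => if (j : nat) == (s - r + i)%N then @tpow K (lam i) else (fun _ => 0).

(* O_lambda = G_oo . delta_lambda, with (g,h).A = g A h^{-1} *)
Definition arc_orbit (K : comNzRingType) (r s : nat) (lam : 'I_r -> enat)
  (A : arcmx K r s) : Prop :=
  exists (g ginv : arcmx K r r) (h hinv : arcmx K s s),
    is_inverse g ginv /\ is_inverse h hinv /\
    aeq A (amul (amul g (@delta_lam K r s lam)) hinv).

(* regular functions on M_oo : polynomials in the coordinates
   x_{ij,k}(A) = k-th coefficient of A i j *)
Inductive polyfun (K : comNzRingType) (m n : nat) : (arcmx K m n -> K) -> Prop :=
  | pf_const (c : K) : polyfun (fun _ => c)
  | pf_coord (i : 'I_m) (j : 'I_n) (k : nat) : polyfun (fun A => A i j k)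
  | pf_add f g : polyfun f -> polyfun g -> polyfun (fun A => f A + g A)
  | pf_mul f g : polyfun f -> polyfun g -> polyfun (fun A => f A * g A).

Definition zclosure (K : comNzRingType) (m n : nat) (S : arcmx K m n -> Prop)
  (B : arcmx K m n) : Prop :=
  forall f, polyfun f -> (forall A, S A -> f A = 0) -> f B = 0.

(* Fix i and consider the minor of size r - i of an arc matrix taken on rows
   i, ..., r - 1 and on the last r - i columns.  For A = g delta_lam h^-1 the
   rows of delta_lam h^-1 are divisible by t^lam_j, so by the Cauchy-Binet
   expansion the minor is a sum of terms divisible by t^(lam_j1 + ... + lam_jk)
   for distinct indices j1, ..., jk; since lam is nonincreasing the smallest
   such exponent is the tail sum lam_i + ... + lam_(r-1).  Hence the first
   tail-sum coefficients of the minor, which are polynomials in the arc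
   coordinates, vanish on O_lam and therefore on its Zariski closure.  On
   delta_lam' the minor is exactly t^(lam'_i + ... + lam'_(r-1)), so that
   exponent cannot be smaller than the tail sum of lam.  Everything is done
   modulo a power t^n, so that infinite exponents and power series reduce to
   truncated polynomials. *)
From HB Require Import structures.
From mathcomp Require Import all_boot all_order all_algebra.
From mathcomp Require Import complex.
From mathcomp Require Import reals.
From mathcomp Require Import zify ring perm.
From Stdlib Require Import FunctionalExtensionality.
Set Implicit Arguments. Unset Strict Implicit. Unset Printing Implicit Defensive.
Import Order.TTheory GRing.Theory Num.Theory.
Local Open Scope ring_scope.

Section DvdXn.
Variable K : comNzRingType.
Implicit Types (n : nat) (p q : {poly K}).

Definition dvdXn n p : Prop := forall m, (m < n)%N -> p`_m = 0.

Definition eqXn n p q : Prop := dvdXn n (p - q).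

Lemma dvdXn0 n : dvdXn n 0.
Proof. by move=> m _; rewrite coef0. Qed.

Lemma dvdXnD n p q : dvdXn n p -> dvdXn n q -> dvdXn n (p + q).
Proof. by move=> hp hq m hm; rewrite coefD hp // hq // addr0. Qed.

Lemma dvdXnW a b p : (b <= a)%N -> dvdXn a p -> dvdXn b p.
Proof. by move=> hba hp m hm; apply: hp; apply: leq_trans hba. Qed.

Lemma dvdXnM a b p q : dvdXn a p -> dvdXn b q -> dvdXn (a + b) (p * q).
Proof.
move=> hp hq m hm; rewrite coefM big1 // => j _.
have [ja|ja] := ltnP j a; first by rewrite hp // mul0r.
rewrite hq ?mulr0 //; have := ltn_ord j; lia.
Qed.

Lemma dvdXnMl n p q : dvdXn n q -> dvdXn n (p * q).
Proof. by move=> hq; rewrite -[n]add0n; apply: dvdXnM => // m. Qed.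

Lemma dvdXnMr n p q : dvdXn n p -> dvdXn n (p * q).
Proof. by move=> hp; rewrite -[n]addn0; apply: dvdXnM => // m. Qed.

Lemma dvdXn_sum n (I : Type) (r : seq I) (P : pred I) (F : I -> {poly K}) :
  (forall i, P i -> dvdXn n (F i)) -> dvdXn n (\sum_(i <- r | P i) F i).
Proof. by move=> h; apply: (big_ind (dvdXn n)) => //; [exact: dvdXn0 | exact: dvdXnD]. Qed.

Lemma dvdXn_prod (I : Type) (r : seq I) (P : pred I) (d : I -> nat) (F : I -> {poly K}) :
  (forall i, P i -> dvdXn (d i) (F i)) ->
  dvdXn (\sum_(i <- r | P i) d i) (\prod_(i <- r | P i) F i).
Proof. by move=> h; apply: (big_ind2 dvdXn) => // ????; apply: dvdXnM. Qed.

Lemma eqXn_refl n p : eqXn n p p.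
Proof. by rewrite /eqXn subrr; apply: dvdXn0. Qed.

Lemma eqXn_trans n p q p' : eqXn n p q -> eqXn n q p' -> eqXn n p p'.
Proof.
by move=> h1 h2; rewrite /eqXn (_ : p - p' = (p - q) + (q - p')); [apply: dvdXnD | ring].
Qed.

Lemma eqXnD n p1 p2 q1 q2 : eqXn n p1 q1 -> eqXn n p2 q2 -> eqXn n (p1 + p2) (q1 + q2).
Proof.
move=> h1 h2; rewrite /eqXn (_ : p1 + p2 - (q1 + q2) = (p1 - q1) + (p2 - q2)) //; last by ring.
exact: dvdXnD.
Qed.

Lemma eqXnM n p1 p2 q1 q2 : eqXn n p1 q1 -> eqXn n p2 q2 -> eqXn n (p1 * p2) (q1 * q2).
Proof.
move=> h1 h2; rewrite /eqXn (_ : p1 * p2 - q1 * q2 = p1 * (p2 - q2) + (p1 - q1) * q2); last by ring.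
by apply: dvdXnD; [apply: dvdXnMl | apply: dvdXnMr].
Qed.

Lemma eqXn_dvdXn n p q : eqXn n p q -> dvdXn n q -> dvdXn n p.
Proof. by move=> h hq; rewrite (_ : p = (p - q) + q); [apply: dvdXnD | ring]. Qed.

Lemma eqXn_sum n (I : Type) (r : seq I) (P : pred I) (F G : I -> {poly K}) :
  (forall i, P i -> eqXn n (F i) (G i)) ->
  eqXn n (\sum_(i <- r | P i) F i) (\sum_(i <- r | P i) G i).
Proof.
by move=> h; apply: (big_ind2 (eqXn n)) => [|????|//]; [exact: eqXn_refl | exact: eqXnD].
Qed.

Lemma eqXn_prod n (I : Type) (r : seq I) (P : pred I) (F G : I -> {poly K}) :
  (forall i, P i -> eqXn n (F i) (G i)) ->
  eqXn n (\prod_(i <- r | P i) F i) (\prod_(i <- r | P i) G i).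
Proof.
by move=> h; apply: (big_ind2 (eqXn n)) => [|????|//]; [exact: eqXn_refl | exact: eqXnM].
Qed.

Lemma eqXn_det n k (A B : 'M[{poly K}]_k) :
  (forall i j, eqXn n (A i j) (B i j)) -> eqXn n (\det A) (\det B).
Proof.
move=> h; apply: eqXn_sum => s _; apply: eqXnM; first exact: eqXn_refl.
by apply: eqXn_prod => i _.
Qed.

Lemma eqXn_mulmx n a b c (A A' : 'M[{poly K}]_(a, b)) (B B' : 'M[{poly K}]_(b, c)) :
  (forall i j, eqXn n (A i j) (A' i j)) -> (forall i j, eqXn n (B i j) (B' i j)) ->
  forall i j, eqXn n ((A *m B) i j) ((A' *m B') i j).
Proof. by move=> hA hB i j; rewrite !mxE; apply: eqXn_sum => l _; apply: eqXnM. Qed.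

(* Expanding each row of [X *m M] along the columns of [X] yields one term per
   choice function [g] of rows of [M]; the terms with [g] non-injective have
   two equal rows and vanish, which is the Cauchy-Binet formula in disguise. *)
Lemma det_mulmx_ffun k r (X : 'M[{poly K}]_(k, r)) (M : 'M[{poly K}]_(r, k)) :
  \det (X *m M) = \sum_(g : {ffun 'I_k -> 'I_r})
     (\prod_a X a (g a)) * \det (\matrix_(a, b) M (g a) b).
Proof.
rewrite /determinant.
under eq_bigr => s _ do under eq_bigr => a _ do rewrite mxE.
under eq_bigr => s _ do rewrite bigA_distr_bigA mulr_sumr.
rewrite exchange_big /=; apply: eq_bigr => g _.
rewrite mulr_sumr; apply: eq_bigr => s _.
rewrite big_split /=.
under [X in _ = _ * (_ * X)]eq_bigr => a _ do rewrite mxE.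
by rewrite mulrCA.
Qed.

Lemma dvdXn_det_mulmx n k r (X : 'M[{poly K}]_(k, r)) (M : 'M[{poly K}]_(r, k))
    (mu : 'I_r -> nat) :
  (forall j c, dvdXn (mu j) (M j c)) ->
  (forall g : {ffun 'I_k -> 'I_r}, injective g -> (n <= \sum_a mu (g a))%N) ->
  dvdXn n (\det (X *m M)).
Proof.
move=> hM hg; rewrite det_mulmx_ffun; apply: dvdXn_sum => g _; apply: dvdXnMl.
have [/injectiveP inj | /injectivePn[a1 [a2 ne eq]]] := boolP (injectiveb g).
  apply: dvdXnW (hg g inj) _; apply: dvdXn_sum => s _; apply: dvdXnMl.
  by apply: dvdXn_prod => a _; rewrite mxE.
by rewrite (determinant_alternate ne) => [|b]; [exact: dvdXn0 | rewrite !mxE eq].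
Qed.

End DvdXn.

Lemma leq_sum_final_segment r (i0 : 'I_r) (mu : 'I_r -> nat) (S T : {set 'I_r}) :
  (forall i j : 'I_r, (i <= j)%N -> (mu j <= mu i)%N) ->
  #|S| = #|T| -> (forall j, (j \in T) = (i0 <= j)%N) ->
  (\sum_(j in T) mu j <= \sum_(j in S) mu j)%N.
Proof.
move=> mono hc hT.
rewrite (big_setID (A := T) S) (big_setID (A := S) T) /= setIC leq_add2l.
have cTS : #|T :\: S| = #|S :\: T|.
  by have := cardsID S T; have := cardsID T S; rewrite setIC hc; lia.
apply: (@leq_trans (#|T :\: S| * mu i0)).
  rewrite -sum_nat_const; apply: leq_sum => j; rewrite inE hT => /andP[_ h].
  exact: mono.
rewrite cTS -sum_nat_const; apply: leq_sum => j; rewrite inE hT => /andP[h _].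
by apply: mono; lia.
Qed.

Lemma eaddA : associative eadd.
Proof. by case=> [a|] [b|] [c|] //=; rewrite addnA. Qed.

Lemma eaddC : commutative eadd.
Proof. by case=> [a|] [b|] //=; rewrite addnC. Qed.

Lemma add0e : left_id (Fin 0) eadd.
Proof. by case. Qed.

HB.instance Definition _ := Monoid.isComLaw.Build enat (Fin 0) eadd eaddA eaddC add0e.

Definition ecap (n : nat) (e : enat) : nat :=
  match e with Fin a => minn a n | Inf => n end.

Lemma ecap_sum n (I : Type) (r : seq I) (P : pred I) (F : I -> enat) :
  (ecap n (\big[eadd/Fin 0]_(i <- r | P i) F i) <= \sum_(i <- r | P i) ecap n (F i))%N.
Proof.
apply: (big_ind2 (fun e x => ecap n e <= x)%N) => [|e1 x1 e2 x2 h1 h2|//] /=.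
  by rewrite min0n.
apply: leq_trans (leq_add h1 h2); case: e1 {h1} => [a|]; case: e2 {h2} => [b|] /=; lia.
Qed.

Lemma leq_ecap n a b : ele a b -> (ecap n a <= ecap n b)%N.
Proof. by case: a => [x|]; case: b => [y|] //= hxy; lia. Qed.

Lemma ecap_Fin_ge n e : ele (Fin n) e -> ecap n e = n.
Proof. by case: e => [a|] //= h; lia. Qed.

Lemma ele_Fin_ge (a b : enat) :
  (forall n, ele (Fin n) a -> ele (Fin n) b) -> ele a b.
Proof.
case: a => [m|] h; first exact: h (leqnn m).
by case: b h => [m|] // /(_ m.+1 isT) /=; rewrite ltnn.
Qed.

Section Truncation.
Variable K : comNzRingType.

Definition trunc (n : nat) (f : pser K) : {poly K} := \poly_(i < n) f i.

Definition tmx n m p (A : arcmx K m p) : 'M[{poly K}]_(m, p) :=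
  \matrix_(i, j) trunc n (A i j).

Lemma trunc_ext n (f g : pser K) : (forall k, f k = g k) -> trunc n f = trunc n g.
Proof. by move=> h; apply/polyP => q; rewrite !coef_poly h. Qed.

Lemma trunc0 n : trunc n (fun _ => 0) = 0.
Proof. by apply/polyP => q; rewrite coef_poly coef0; case: ifP. Qed.

Lemma eqXn_trunc_amul n m p l (A : arcmx K m p) (B : arcmx K p l) i j :
  eqXn n (trunc n (amul A B i j)) ((tmx n A *m tmx n B) i j).
Proof.
move=> q hq; rewrite coefB coef_poly hq !mxE coef_sum.
apply/eqP; rewrite subr_eq0; apply/eqP/eq_bigr => l0 _.
rewrite coefM /pmul; apply: eq_bigr => t _; rewrite !mxE !coef_poly.
have ht := ltn_ord t.
have -> : (t < n)%N by lia.
by have -> : (q - t < n)%N by lia.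
Qed.

Lemma eqXn_trunc_amul3 n m p (g : arcmx K m m) (D : arcmx K m p) (h : arcmx K p p)
    (A : arcmx K m p) :
  aeq A (amul (amul g D) h) ->
  forall i j, eqXn n (trunc n (A i j)) ((tmx n g *m tmx n D *m tmx n h) i j).
Proof.
move=> hA i j; rewrite (trunc_ext n (hA i j)).
apply: (eqXn_trans (q := (tmx n (amul g D) *m tmx n h) i j)).
  exact: eqXn_trunc_amul.
apply: eqXn_mulmx => i1 j1; last by rewrite mxE; apply: eqXn_refl.
rewrite {1}/tmx mxE; exact: eqXn_trunc_amul.
Qed.

Lemma trunc_tpow_dvdXn n e : dvdXn (ecap n e) (trunc n (@tpow K e)).
Proof.
move=> q hq; rewrite coef_poly; case: ifP => // _; rewrite /tpow.
by case: e hq => [a|] //= hq; case: eqP => // eq; lia.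
Qed.

Lemma prod_trunc_tpow n (I : Type) (l : seq I) (F : I -> enat) m :
  \big[eadd/Fin 0]_(i <- l) F i = Fin m -> (m < n)%N ->
  \prod_(i <- l) trunc n (@tpow K (F i)) = 'X^m.
Proof.
elim: l m => [|x l IH] m; first by rewrite !big_nil => -[<-] _; rewrite expr0.
rewrite big_cons; case hx: (F x) => [a|] //.
case hl: (\big[eadd/Fin 0]_(i <- l) F i) => [b|] //= [<-] hm.
rewrite big_cons hx (IH b hl) ?exprD; last lia.
congr (_ * _); apply/polyP => q; rewrite coef_poly coefXn /tpow.
by case: ifP => hq //; case: eqP => // hqa; lia.
Qed.

Lemma amul1a m p (A : arcmx K m p) : aeq (amul (@aone K m) A) A.
Proof.
move=> i j k; rewrite /amul (bigD1 i) //= big1 ?addr0 => [|l nl].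
  rewrite /pmul big_ord_recl /= /aone eqxx mul1r subn0 big1 ?addr0 // => q _.
  by rewrite mul0r.
by rewrite /pmul big1 // => q _; rewrite /aone eq_sym (negbTE nl) mul0r.
Qed.

Lemma amula1 m p (A : arcmx K m p) : aeq (amul A (@aone K p)) A.
Proof.
move=> i j k; rewrite /amul (bigD1 j) //= big1 ?addr0 => [|l nl].
  rewrite /pmul big_ord_recr /= /aone eqxx subnn mulr1 big1 ?add0r // => q _.
  by rewrite (_ : (k - q)%N == 0%N = false) ?mulr0 //; have := ltn_ord q; lia.
by rewrite /pmul big1 // => q _; rewrite /aone (negbTE nl) mulr0.
Qed.

Lemma arc_orbit_delta r s (lam : 'I_r -> enat) : arc_orbit lam (@delta_lam K r s lam).
Proof.
exists (@aone K r), (@aone K r), (@aone K s), (@aone K s).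
do 2![split; first by split; apply: amul1a].
by move=> i j k; rewrite amula1 amul1a.
Qed.

End Truncation.

Section PolynomialFunctions.
Variables (K : comNzRingType) (m p : nat).

Lemma polyfun_ext (f g : arcmx K m p -> K) : polyfun f -> f =1 g -> polyfun g.
Proof. by move=> hf /functional_extensionality <-. Qed.

Lemma polyfun_sum (I : Type) (r : seq I) (P : pred I) (F : I -> arcmx K m p -> K) :
  (forall i, polyfun (F i)) -> polyfun (fun A => \sum_(i <- r | P i) F i A).
Proof.
move=> h; elim: r => [|i r IH].
  by apply: polyfun_ext (pf_const _ _ 0) _ => A; rewrite big_nil.
case Pi: (P i).
  by apply: polyfun_ext (pf_add (h i) IH) _ => A; rewrite big_cons Pi.
by apply: polyfun_ext IH _ => A; rewrite big_cons Pi.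
Qed.

Definition polyfun_coefs (F : arcmx K m p -> {poly K}) : Prop :=
  forall q, polyfun (fun A => (F A)`_q).

Lemma polyfun_coefs_const (c : {poly K}) : polyfun_coefs (fun _ => c).
Proof. by move=> q; apply: pf_const. Qed.

Lemma polyfun_coefsM F G :
  polyfun_coefs F -> polyfun_coefs G -> polyfun_coefs (fun A => F A * G A).
Proof.
move=> hF hG q.
have := @polyfun_sum _ (index_enum 'I_q.+1) xpredT
   (fun t A => (F A)`_t * (G A)`_(q - t)) (fun t => pf_mul (hF t) (hG (q - t)%N)).
by move/polyfun_ext; apply=> A; rewrite coefM.
Qed.

Lemma polyfun_coefs_sum (I : Type) (r : seq I) (P : pred I) (F : I -> arcmx K m p -> {poly K}) :
  (forall i, polyfun_coefs (F i)) -> polyfun_coefs (fun A => \sum_(i <- r | P i) F i A).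
Proof.
move=> h q; apply: polyfun_ext (@polyfun_sum _ r P (fun i A => (F i A)`_q) (fun i => h i q)) _.
by move=> A; rewrite coef_sum.
Qed.

Lemma polyfun_coefs_prod (I : Type) (r : seq I) (P : pred I) (F : I -> arcmx K m p -> {poly K}) :
  (forall i, polyfun_coefs (F i)) -> polyfun_coefs (fun A => \prod_(i <- r | P i) F i A).
Proof.
move=> h; elim: r => [|i r IH] q.
  by apply: polyfun_ext (polyfun_coefs_const 1 q) _ => A; rewrite big_nil.
case Pi: (P i).
  by apply: polyfun_ext (polyfun_coefsM (h i) IH q) _ => A; rewrite big_cons Pi.
by apply: polyfun_ext (IH q) _ => A; rewrite big_cons Pi.
Qed.

Lemma polyfun_coefs_trunc n i j : polyfun_coefs (fun A => trunc n (A i j)).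
Proof.
move=> q; case hq: (q < n)%N.
  by apply: polyfun_ext (pf_coord K i j q) _ => A; rewrite coef_poly hq.
by apply: polyfun_ext (pf_const _ _ 0) _ => A; rewrite coef_poly hq.
Qed.

Lemma polyfun_coefs_det k (F : 'I_k -> 'I_k -> arcmx K m p -> {poly K}) :
  (forall a b, polyfun_coefs (F a b)) ->
  polyfun_coefs (fun A => \det (\matrix_(a, b) F a b A)).
Proof.
move=> h; apply: polyfun_coefs_sum => s; apply: polyfun_coefsM.
  exact: polyfun_coefs_const.
move=> q; have := polyfun_coefs_prod (index_enum 'I_k) xpredT (fun i => h i (s i)) q.
move/polyfun_ext; apply=> A.
by under [in RHS]eq_bigr => i _ do rewrite mxE.
Qed.

End PolynomialFunctions.

Section TailMinor.
Variables (K : comNzRingType) (r s : nat) (i0 : 'I_r).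
Hypothesis r_le_s : (r <= s)%N.

Lemma tail_row_subproof (a : 'I_(r - i0)) : (i0 + a < r)%N.
Proof. by have := ltn_ord a; have := ltn_ord i0; lia. Qed.

Definition tail_row (a : 'I_(r - i0)) : 'I_r := Ordinal (tail_row_subproof a).

Lemma tail_col_subproof (a : 'I_(r - i0)) : (s - r + (i0 + a) < s)%N.
Proof. by have := ltn_ord a; have := ltn_ord i0; lia. Qed.

(* Row [tail_row a] of [delta_lam] has its entry in column [tail_col a]. *)
Definition tail_col (a : 'I_(r - i0)) : 'I_s := Ordinal (tail_col_subproof a).

Definition tail_minor (n : nat) (A : arcmx K r s) : {poly K} :=
  \det (\matrix_(a, b) trunc n (A (tail_row a) (tail_col b))).

Lemma tail_row_inj : injective tail_row.
Proof. by move=> a b /(congr1 val) /= h; apply: val_inj => /=; lia. Qed.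

Lemma mem_imset_tail_row j : (j \in tail_row @: setT) = (i0 <= j)%N.
Proof.
apply/imsetP/idP => [[a _ ->]|h]; first by rewrite /= leq_addr.
have hj : (j - i0 < r - i0)%N by have := ltn_ord j; lia.
by exists (Ordinal hj); rewrite ?inE //; apply: val_inj => /=; lia.
Qed.

Lemma tailsum_tail_row (lam : 'I_r -> enat) :
  tailsum lam i0 = \big[eadd/Fin 0]_(a < r - i0) lam (tail_row a).
Proof.
rewrite /tailsum (eq_bigl (fun j => j \in tail_row @: setT)) => [|j].
  by rewrite big_imset => [|x y _ _]; [apply: eq_bigl => a; rewrite inE | exact: tail_row_inj].
by rewrite mem_imset_tail_row.
Qed.

Lemma polyfun_coefs_tail_minor n : polyfun_coefs (tail_minor n).
Proof. by apply: polyfun_coefs_det => a b; apply: polyfun_coefs_trunc. Qed.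

(* Of any [r - i0] distinct rows, those of the final segment have the least
   total exponent, because [lam] is nonincreasing. *)
Lemma leq_tailsum_inj (lam : 'I_r -> enat) n (g : {ffun 'I_(r - i0) -> 'I_r}) :
  prepartition lam -> ele (Fin n) (tailsum lam i0) -> injective g ->
  (n <= \sum_a ecap n (lam (g a)))%N.
Proof.
move=> mono hn injg.
have -> : (\sum_a ecap n (lam (g a)) = \sum_(j in g @: setT) ecap n (lam j))%N.
  rewrite big_imset /= => [|x y _ _]; last exact: injg.
  by apply: eq_bigl => a; rewrite inE.
rewrite -{1}(ecap_Fin_ge hn); apply: leq_trans (ecap_sum _ _ _ _) _.
rewrite (eq_bigl (fun j => j \in tail_row @: setT)) => [|j]; last by rewrite mem_imset_tail_row.
apply: (leq_sum_final_segment (i0 := i0)) => [i j hij||j].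
- exact/leq_ecap/mono.
- by rewrite !card_imset //; exact: tail_row_inj.
- exact: mem_imset_tail_row.
Qed.

Lemma dvdXn_tail_minor (lam : 'I_r -> enat) n (A : arcmx K r s) :
  prepartition lam -> ele (Fin n) (tailsum lam i0) -> arc_orbit lam A ->
  dvdXn n (tail_minor n A).
Proof.
move=> mono hn [g [ginv [h [hinv [_ [_ hA]]]]]].
pose X := \matrix_(a, l) tmx n g (tail_row a) l.
pose M := tmx n (@delta_lam K r s lam) *m \matrix_(l, b) tmx n hinv l (tail_col b).
apply: (@eqXn_dvdXn _ _ _ (\det (X *m M))).
  apply: eqXn_det => a b; rewrite mxE.
  have -> : (X *m M) a b =
      (tmx n g *m tmx n (@delta_lam K r s lam) *m tmx n hinv) (tail_row a) (tail_col b).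
    rewrite -mulmxA !mxE; apply: eq_bigr => l _; rewrite !mxE; congr (_ * _).
    by apply: eq_bigr => l' _; rewrite !mxE.
  exact: eqXn_trunc_amul3.
apply: (@dvdXn_det_mulmx _ n _ _ X M (fun j => ecap n (lam j))) => [j c|g' injg].
  rewrite mxE; apply: dvdXn_sum => l _; apply: dvdXnMr.
  rewrite mxE /delta_lam; case: eqP => _; first exact: trunc_tpow_dvdXn.
  by rewrite trunc0; apply: dvdXn0.
exact: leq_tailsum_inj.
Qed.

Lemma tail_minor_delta (lam' : 'I_r -> enat) n m :
  tailsum lam' i0 = Fin m -> (m < n)%N ->
  tail_minor n (@delta_lam K r s lam') = 'X^m.
Proof.
move=> hm mn; rewrite /tail_minor.
have -> : \matrix_(a, b) trunc n (@delta_lam K r s lam' (tail_row a) (tail_col b)) =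
          diag_mx (\row_a trunc n (@tpow K (lam' (tail_row a)))).
  apply/matrixP => a b; rewrite !mxE /delta_lam /=.
  have [->|nab] := eqVneq a b; first by rewrite eqxx mulr1n.
  rewrite mulr0n ifF ?trunc0 //.
  by apply/eqP => hh; move/eqP: nab; apply; apply: val_inj => /=; lia.
rewrite det_diag; under eq_bigr => a _ do rewrite mxE.
by apply: prod_trunc_tpow mn; rewrite -tailsum_tail_row.
Qed.

End TailMinor.

Lemma tailsum_closure_ge (K : comNzRingType) (r s : nat) (i0 : 'I_r)
    (lam lam' : 'I_r -> enat) n :
  (r <= s)%N -> prepartition lam ->
  (forall B : arcmx K r s, arc_orbit lam' B -> zclosure (arc_orbit lam) B) ->
  ele (Fin n) (tailsum lam i0) -> ele (Fin n) (tailsum lam' i0).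
Proof.
move=> r_le_s mono closure hn; case hm: (tailsum lam' i0) => [m|] //=.
rewrite leqNgt; apply/negP => mn.
have vanish (A : arcmx K r s) : arc_orbit lam A -> (tail_minor i0 r_le_s n A)`_m = 0.
  by move=> hA; apply: dvdXn_tail_minor mono hn hA _ mn.
have := closure _ (@arc_orbit_delta K r s lam') _ (polyfun_coefs_tail_minor K i0 r_le_s n m) vanish.
by rewrite (tail_minor_delta K r_le_s hm mn) coefXn eqxx => /eqP; rewrite oner_eq0.
Qed.

Theorem proposition4p2 (R : realType) (r s : nat) (lam lam' : 'I_r -> enat) :
  (r <= s)%N ->
  prepartition lam -> prepartition lam' ->
  (forall B : arcmx (R[i]) r s, arc_orbit lam' B -> zclosure (arc_orbit lam) B) ->
  ledom lam lam'.
Proof.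
move=> r_le_s mono _ closure i0; apply: ele_Fin_ge => n.
exact: tailsum_closure_ge r_le_s mono closure.
Qed.
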